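(* Consider the following market. There are $n$ agents $[n]=\{1,\dots,n\}$ and a seller with an unlimited supply of an identical good (at most one copy per agent, zero production cost). Each agent $i$ has a private valuation function $v_i:2^{[n]}\to\mathbb{R}$ assigning a value to every possible winning set $S\subseteq[n]$, satisfying: $v_i(S)\ge 0$; $v_i(S)=0$ if $i\notin S$; $v_i(S)\le v_i(R)$ whenever $S\subseteq R$; and $v_i(S\cup R)\le v_i(S)+v_i(R)$ for all $S,R\subseteq[n]$ with $i\in S\cap R$. Agents report bid functions $b_i:2^{[n]}\to\mathbb{R}_{\ge 0}$ (possibly different from $v_i$). Define the mechanism $\mathcal{M}$ as follows. 1. Independently and uniformly at random put every agent into one of three sets $A,B,C$. 2. For $X\in\{A,B\}$ let $r_X(C)=\max\{c\cdot|T| : c\ge 0,\ T\subseteq C,\ b_i(T\cup X)\ge c \text{ for all } i\in T\}$, and let $r(C)=\max\{r_A(C),r_B(C)\}$. 3. Give the good to every agent of $A$ for free (price $0$). 4. Run the following cost-sharing procedure with $r=r(C)$, $X=B$, $Y=A$: set $S\leftarrow X$; repeat: let $T=\{i\in S : b_i(S\cup Y)<r/|S|\}$ and set $S\leftarrow S\setminus T$, until $T=\emptyset$. If at the end $S\neq\emptyset$, sell the good to every agent of $S$ at price $r/|S|$. Agents of $C$ and agents of $B$ not sold the good receive nothing and pay nothing. Then $\mathcal{M}$ is universally truthful.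
   Context: For a deterministic mechanism that selects a winning set $S$ and charges each $i\in S$ a price $p_i$ (agents outside $S$ pay $0$), the utility of agent $i$ is $v_i(S)-p_i$ if $i\in S$ and $0$ otherwise. A deterministic mechanism is truthful if for every agent $i$ and every fixed reports of the other agents, reporting $b_i=v_i$ maximizes agent $i$'s utility over all possible reports $b_i$. A randomized mechanism is universally truthful if it is a probability distribution over deterministic truthful mechanisms. *)

From HB Require Import structures.
From mathcomp Require Import all_boot all_order all_algebra.
From mathcomp Require Import boolp classical_sets reals.

Set Implicit Arguments.
Unset Strict Implicit.
Unset Printing Implicit Defensive.

Import Order.TTheory GRing.Theory Num.Theory.
Local Open Scope ring_scope.

Section Market.
Variables (R : realType) (n : nat).

Definition agent := 'I_n.
Definition valfun := {set 'I_n} -> R.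
Definition profile := 'I_n -> valfun.

Definition valuation (i : 'I_n) (v : valfun) : Prop :=
  [/\ (forall S : {set 'I_n}, 0 <= v S),
      (forall S : {set 'I_n}, i \notin S -> v S = 0),
      (forall S T : {set 'I_n}, S \subset T -> v S <= v T) &
      (forall S T : {set 'I_n}, i \in S -> i \in T -> v (S :|: T) <= v S + v T)].

Definition nonneg_profile (b : profile) : Prop := forall (i : 'I_n) (S : {set 'I_n}), 0 <= b i S.

Definition det_mechanism := profile -> {set 'I_n} * ('I_n -> R).

Definition utility (i : 'I_n) (v : valfun) (o : {set 'I_n} * ('I_n -> R)) : R :=
  if i \in o.1 then v o.1 - o.2 i else 0.

Definition upd (b : profile) (i : 'I_n) (bi : valfun) : profile :=
  fun j => if j == i then bi else b j.

Definition truthful (M : det_mechanism) : Prop :=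
  forall (i : 'I_n) (v : valfun) (b : profile),
    valuation i v -> nonneg_profile b ->
    utility i v (M b) <= utility i v (M (upd b i v)).

(* A randomized mechanism with random seed in a finite type Omega, drawn with
   probabilities p; it is universally truthful if it is a distribution over
   deterministic truthful mechanisms, i.e. every mechanism in the support
   is truthful. *)
Definition universally_truthful (Omega : finType) (p : Omega -> R)
    (M : Omega -> det_mechanism) : Prop :=
  (forall w, 0 <= p w) /\ (\sum_w p w = 1) /\
  (forall w, 0 < p w -> truthful (M w)).

(* r_X(C) = max { c |T| : c >= 0, T \subset C, b_i(T u X) >= c for i in T }
   (the maximum exists; we write it as the supremum of that set). *)
Definition rX (b : profile) (X C : {set 'I_n}) : R :=
  sup (fun x : R => exists (c : R) (T : {set 'I_n}),
         [/\ 0 <= c, T \subset C,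
             (forall i, i \in T -> c <= b i (T :|: X)) &
             x = c * #|T|%:R]).

Definition rC (b : profile) (A B C : {set 'I_n}) : R :=
  Num.max (rX b A C) (rX b B C).

Definition cs_step (b : profile) (r : R) (Y S : {set 'I_n}) : {set 'I_n} :=
  S :\: [set i in S | b i (S :|: Y) < r / #|S|%:R].

(* The loop "repeat ... until T = empty": S strictly shrinks until T is empty,
   so after #|X| + 1 rounds the fixpoint has been reached. *)
Definition cost_share (b : profile) (r : R) (X Y : {set 'I_n}) : {set 'I_n} :=
  iter #|X|.+1 (cs_step b r Y) X.

Definition seed := {ffun 'I_n -> 'I_3}.

Definition partA (s : seed) : {set 'I_n} := [set i | val (s i) == 0%N].
Definition partB (s : seed) : {set 'I_n} := [set i | val (s i) == 1%N].
Definition partC (s : seed) : {set 'I_n} := [set i | val (s i) == 2%N].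

Definition mech_det (s : seed) : det_mechanism := fun b =>
  let A := partA s in let B := partB s in let C := partC s in
  let r := rC b A B C in
  let S := cost_share b r B A in
  (A :|: S, fun i => if i \in S then r / #|S|%:R else 0).

Definition seed_prob (s : seed) : R := (3%:R ^+ n)^-1.

End Market.

(** Fix the random partition (A, B, C). An agent of C never receives the good
    and an agent of A gets it for free; neither can influence the outcome,
    since r(C) only reads the bids of C and the cost-sharing procedure only
    reads the bids of B. For an agent i of B the price r(C) is independent of
    its bid, and the procedure is a monotone elimination: if i survives a
    misreport at a price its true value covers, then reporting truthfully
    keeps i in every intermediate set, so the final set and price are the
    same; otherwise the misreport yields non-positive utility, while the
    truthful report always yields non-negative utility because a survivor's
    bid covers its price. *)
From HB Require Import structures.
From mathcomp Require Import all_boot all_order all_algebra.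
From mathcomp Require Import boolp classical_sets reals.
From mathcomp Require Import zify.

Set Implicit Arguments.
Unset Strict Implicit.
Unset Printing Implicit Defensive.

Import Order.TTheory GRing.Theory Num.Theory.
Local Open Scope ring_scope.

Section DeflationaryIteration.
Variables (T : finType) (f : {set T} -> {set T}).
Hypothesis f_subset : forall S, f S \subset S.
Implicit Types X : {set T}.

Lemma iter_deflationary_mono X k m : (k <= m)%N ->
  iter m f X \subset iter k f X.
Proof.
move=> /subnKC <-; elim: (m - k)%N => [|d IH]; first by rewrite addn0 subxx.
by rewrite addnS /=; apply: fintype.subset_trans (f_subset _) IH.
Qed.

Lemma iter_deflationary_subset X k : iter k f X \subset X.
Proof. exact: (@iter_deflationary_mono X 0). Qed.

(* Until a fixpoint is reached each round removes at least one element. *)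
Lemma iter_deflationary_fix X : f (iter #|X|.+1 f X) = iter #|X|.+1 f X.
Proof.
suff shrink k : f (iter k f X) = iter k f X \/ (#|iter k f X| + k <= #|X|)%N.
  by case: (shrink #|X|.+1) => //; lia.
elim: k => [|k [fix_k|le_k]] /=; [by right; rewrite addn0 | by left; rewrite !fix_k |].
have [fix_k|ne_k] := eqVneq (f (iter k f X)) (iter k f X); first by left; rewrite !fix_k.
right; rewrite addnS; apply: leq_trans le_k; rewrite ltn_add2r.
by apply: proper_card; rewrite finset.properEneq ne_k f_subset.
Qed.

End DeflationaryIteration.

Section CostSharing.
Variables (R : realType) (n : nat).
Implicit Types (b : profile R n) (r : R) (i j : 'I_n) (v : valfun R n).
Implicit Types (S T X Y C : {set 'I_n}).

Lemma upd_eq b i v : upd b i v i = v.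
Proof. by rewrite /upd eqxx. Qed.

Lemma upd_neq b i v j : j != i -> upd b i v j = b j.
Proof. by rewrite /upd => /negbTE ->. Qed.

Lemma eq_rX b b' X C : {in C, b' =1 b} -> rX b X C = rX b' X C.
Proof.
move=> eq_b; rewrite /rX; congr sup; apply/funext => x; apply/propext.
by split=> -[c [T [c0 TC bT ->]]]; exists c, T; split=> // j jT;
  [rewrite eq_b | rewrite -eq_b]; rewrite ?bT ?(fintype.subsetP TC).
Qed.

Lemma rC_upd b i v A B C : i \notin C -> rC (upd b i v) A B C = rC b A B C.
Proof.
move=> iC; have eq_b : {in C, upd b i v =1 b}.
  by move=> j jC; apply: upd_neq; apply: contraNneq iC => <-.
by rewrite /rC !(eq_rX _ eq_b).
Qed.

Lemma in_cs_step b r Y S j :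
  (j \in cs_step b r Y S) = (j \in S) && (r / #|S|%:R <= b j (S :|: Y)).
Proof. by rewrite /cs_step !inE leNgt andbC; case: (j \in S). Qed.

Lemma cs_step_subset b r Y S : cs_step b r Y S \subset S.
Proof. by apply/fintype.subsetP => j; rewrite in_cs_step => /andP[]. Qed.

Lemma eq_cs_step b b' r Y S : {in S, b' =1 b} -> cs_step b' r Y S = cs_step b r Y S.
Proof.
move=> eq_b; apply/finset.setP => j; rewrite !in_cs_step.
by case jS: (j \in S) => //=; rewrite eq_b.
Qed.

Lemma cost_share_subset b r X Y : cost_share b r X Y \subset X.
Proof. exact/iter_deflationary_subset/cs_step_subset. Qed.

Lemma cost_share_bid_ge b r X Y j (S := cost_share b r X Y) :
  j \in S -> r / #|S|%:R <= b j (S :|: Y).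
Proof.
have fixS : cs_step b r Y S = S by apply/iter_deflationary_fix/cs_step_subset.
by rewrite -{1}fixS in_cs_step => /andP[].
Qed.

Lemma cost_share_upd_notin b r X Y i v :
  i \notin X -> cost_share (upd b i v) r X Y = cost_share b r X Y.
Proof.
move=> iX; rewrite /cost_share; elim: #|X|.+1 => [|k IH] //=.
rewrite IH; apply: eq_cs_step => j.
move=> /(fintype.subsetP (iter_deflationary_subset (@cs_step_subset b r Y) _ _)) jX.
by apply: upd_neq; apply: contraNneq iX => <-.
Qed.

(* Truthful reporting keeps i in every intermediate set M of the procedure:
   S \subset M gives r / |M| <= r / |S| <= v (S u Y) <= v (M u Y). *)
Lemma cost_share_upd_survivor b r X Y i v (S := cost_share b r X Y) :
  (forall T, 0 <= v T) -> (forall T T', T \subset T' -> v T <= v T') ->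
  i \in S -> r / #|S|%:R <= v (S :|: Y) -> cost_share (upd b i v) r X Y = S.
Proof.
move=> v0 v_mono iS priceS; rewrite /S /cost_share.
have S_sub k : (k <= #|X|.+1)%N -> S \subset iter k (cs_step b r Y) X.
  exact/iter_deflationary_mono/cs_step_subset.
suff iter_eq k : (k <= #|X|.+1)%N ->
    iter k (cs_step (upd b i v) r Y) X = iter k (cs_step b r Y) X by exact: iter_eq.
elim: k => [//|k IH] lt_k /=.
rewrite IH ?(ltnW lt_k) //; set M := iter k _ X.
have SM : S \subset M := S_sub _ (ltnW lt_k).
have iM := fintype.subsetP SM _ iS.
have := fintype.subsetP (S_sub _ lt_k) _ iS.
rewrite in_cs_step => survives; apply/finset.setP => j; rewrite !in_cs_step.
have [->|ne] := eqVneq j i; last by rewrite upd_neq.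
rewrite survives upd_eq iM /=.
have [r_le0|r_gt0] := lerP r 0.
  by apply: le_trans (v0 _); rewrite mulr_le0_ge0 // invr_ge0 ler0n.
apply: le_trans (v_mono _ _ (finset.setSU _ SM)); apply: le_trans priceS.
have S_gt0 : (0 < #|S|)%N by apply/card_gt0P; exists i.
by rewrite ler_pM2l // lef_pV2 ?posrE ?ltr0n ?ler_nat ?subset_leq_card //;
  apply: leq_trans S_gt0 (subset_leq_card SM).
Qed.

End CostSharing.

Section Truthfulness.
Variables (R : realType) (n : nat) (s : seed n).

Lemma seed_part_cases i :
  [\/ [/\ i \in partA s, i \notin partB s & i \notin partC s],
      [/\ i \notin partA s, i \in partB s & i \notin partC s] |
      [/\ i \notin partA s, i \notin partB s & i \in partC s]].
Proof.
rewrite !inE; case: (s i) => -[|[|[|m]]] //= _;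
  by [apply: Or31 | apply: Or32 | apply: Or33].
Qed.

Lemma utility_truthful_ge0 i (v : valfun R n) (b : profile R n) :
  valuation i v -> 0 <= utility i v (mech_det s (upd b i v)).
Proof.
case=> v0 _ _ _; rewrite /utility /=.
set S := cost_share _ _ _ _; case: ifP => // _.
case: ifP => [iS|_]; last by rewrite subr0.
by rewrite subr_ge0 finset.setUC -{2}(upd_eq b i v) cost_share_bid_ge.
Qed.

Lemma truthful_mech_det : truthful (@mech_det R n s).
Proof.
move=> i v b vv _; have truthful_ge0 := utility_truthful_ge0 b vv.
case: (seed_part_cases i) => -[iA iB iC].
- by rewrite /mech_det rC_upd ?cost_share_upd_notin.
- move: truthful_ge0; rewrite /mech_det rC_upd //.
  set r := rC _ _ _ _; set S := cost_share b r _ _.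
  rewrite {2}/utility /= finset.in_setU (negbTE iA) /= => truthful_ge0.
  case iS: (i \in S) => //; case: vv => v0 _ v_mono _.
  have [v_lt|v_ge] := ltP (v (partA s :|: S)) (r / #|S|%:R).
    by apply: le_trans truthful_ge0; rewrite subr_le0 ltW.
  have -> : cost_share (upd b i v) r (partB s) (partA s) = S.
    by apply: cost_share_upd_survivor; rewrite // finset.setUC.
  by rewrite /utility /= finset.in_setU iS orbT.
- apply: le_trans truthful_ge0.
  have notin_cs (r : R) : i \notin cost_share b r (partB s) (partA s).
    by apply: contraNN iB => /(fintype.subsetP (cost_share_subset _ _ _ _)).
  by rewrite /utility /= finset.in_setU (negbTE iA) (negbTE (notin_cs _)).
Qed.

End Truthfulness.

Theorem lemma1 (R : realType) (n : nat) :
  universally_truthful (@seed_prob R n) (@mech_det R n).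
Proof.
split; first by move=> w; rewrite /seed_prob invr_ge0 exprn_ge0 // ler0n.
split; last by move=> w _; exact: truthful_mech_det.
rewrite /seed_prob sumr_const card_ffun !card_ord -[_ *+ _]mulr_natr natrX.
by rewrite mulVf // expf_neq0 // pnatr_eq0.
Qed.
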